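(* Let $F$ be a field and $f=X^n+a_1X^{n-1}+\cdots+a_n\in F[X]$ a separable irreducible polynomial such that $F(\alpha)=S_F(f)$ for any root $\alpha$ of $f$, where $S_F(f)$ is the splitting field of $f$ over $F$. Let $G=\mathrm{Aut}(S_F(f)/F)=\{g_1,\dots,g_n\}$, and let $H_1,\dots,H_k$ be as defined in the context for this group $G$. If $H_i(a_1,\dots,a_n)\ne 0$ for all $1\le i\le k$, then $f$ is normal over $F$, i.e. $\{g(\alpha):g\in G\}$ is a basis of $S_F(f)$ over $F$.
   Context: For a finite group $G=\{g_1,\dots,g_n\}$ assign an indeterminate $X_g$ to each $g\in G$. Let $\rho_1,\dots,\rho_k$ be the irreducible complex representations of $G$, of degrees $m_1,\dots,m_k$, and put $F_i=\det\bigl(\sum_{g\in G}X_g\rho_i(g)\bigr)\in\mathbb C[X_{g_1},\dots,X_{g_n}]$; the coefficients of $F_i$ lie in the ring $\mathfrak o$ of algebraic integers. For each $i$ let $E_i\in\mathfrak o[X_{g_1},\dots,X_{g_n}]$ be a symmetrization of $F_i$, i.e. a polynomial multiple of $F_i$ in $\mathfrak o[X_{g_1},\dots,X_{g_n}]$ that is symmetric in $X_{g_1},\dots,X_{g_n}$, and let $H_i\in\mathfrak o[s_1,\dots,s_n]$ be its symmetric reduction: $E_i(X_{g_1},\dots,X_{g_n})=H_i(s_1,\dots,s_n)$, where $s_j$ is the $j$-th elementary symmetric polynomial in $X_{g_1},\dots,X_{g_n}$. The value $H_i(a_1,\dots,a_n)$ is computed after mapping the coefficients of $H_i$ into an algebraic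 closure of $F$ via a ring homomorphism $\mathfrak o\to\overline F$. *)

From HB Require Import structures.
From mathcomp Require Import all_boot all_order all_algebra all_fingroup.
From mathcomp Require Import all_field all_character.
From mathcomp Require Import mpoly.
Set Implicit Arguments. Unset Strict Implicit. Unset Printing Implicit Defensive.
Import GRing.Theory.
Local Open Scope ring_scope.

(* Group determinant factor F_i = det (sum_g X_g rho_i(g)), for the i-th
   irreducible complex representation 'Chi_i of the finite group G.  The
   indeterminate X_g is 'X_j with g = enum_val j (an enumeration
   g_1, ..., g_n of G, n = #|G|).  Representations are over algC (the
   algebraic closure of Q in C), over which every complex irreducible
   representation of a finite group is realisable. *)
Definition group_det_factor (gT : finGroupType) (G : {group gT}) (i : Iirr G)
  : {mpoly algC[#|G|]} :=
  \det (\matrix_(r, c) \sum_(j < #|G|)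
          'X_j * ((('Chi_i) (enum_val j) r c)%:MP_[#|G|])).

Definition is_symmetrization (n : nat) (P E : {mpoly algC[n]}) : Prop :=
  [/\ E \is a mpolyOver n Aint, E \is symmetric &
      exists2 Q : {mpoly algC[n]}, Q \is a mpolyOver n Aint & E = P * Q].

Definition elem_sym_tuple (n : nat) : n.-tuple {mpoly algC[n]} :=
  [tuple mesym n algC (val j).+1 | j < n].

Definition is_symmetric_reduction (n : nat) (E H : {mpoly algC[n]}) : Prop :=
  H \is a mpolyOver n Aint /\ E = comp_mpoly (elem_sym_tuple n) H.

Definition ring_hom_on_Aint (K : nzRingType) (phi : algC -> K) : Prop :=
  [/\ phi 1 = 1,
      {in Aint &, forall x y, phi (x + y) = phi x + phi y} &
      {in Aint &, forall x y, phi (x * y) = phi x * phi y}].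

Definition is_alg_closure (F : fieldType) (K : closedFieldType)
  (iota : {rmorphism F -> K}) : Prop :=
  forall x : K, exists2 p : {poly F}, p != 0 & root (map_poly iota p) x.

Definition eval_mapped (n : nat) (K : nzRingType) (phi : algC -> K)
  (H : {mpoly algC[n]}) (a : 'I_n -> K) : K := mmap phi a H.

From HB Require Import structures.
From mathcomp Require Import all_boot all_order all_algebra all_fingroup.
From mathcomp Require Import all_field all_character.
From mathcomp Require Import mpoly.
Set Implicit Arguments. Unset Strict Implicit. Unset Printing Implicit Defensive.
Import GRing.Theory.
Local Open Scope ring_scope.

(* Let Θ = det (X_{g^-1 h})_{g,h} be the group determinant of G.  Decomposing the
   regular representation into irreducibles gives Θ = ∏_i F_i^{m_i}, hence
   ∏_i E_i^{m_i} = Θ · ∏_i Q_i^{m_i}, an identity between polynomials with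
   algebraic integer coefficients, to which the ring morphism o -> K can be
   applied.  Embed S_F(f) = F(α) into K over F by some σ and specialise
   X_g := -σ(g α): since f = ∏_g (X - g α), the elementary symmetric
   polynomials become the coefficients a_j, so the left-hand side becomes
   ∏_i H_i(a)^{m_i} ≠ 0.  Therefore det (σ ((g^-1 h) α)) ≠ 0, whereas a linear
   relation ∑_g c_g g(α) = 0 over F would yield a nonzero vector in the left
   kernel of this matrix.  So the n = [S_F(f) : F] conjugates of α are free. *)

Lemma mmap_eq n (R S : nzRingType) (f : R -> S) (h1 h2 : 'I_n -> S) (p : {mpoly R[n]}) :
  h1 =1 h2 -> mmap f h1 p = mmap f h2 p.
Proof. by move=> eq_h; apply: eq_bigr => m _; rewrite (mmap1_eq _ eq_h). Qed.

Lemma mmap_map_mpoly n (R S T : nzRingType) (g : {rmorphism R -> S}) (f : S -> T)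
    (h : 'I_n -> T) (p : {mpoly R[n]}) :
  injective g -> mmap f h (map_mpoly g p) = mmap (f \o g) h p.
Proof.
move=> g_inj; rewrite /mmap (perm_big _ (msupp_map_mpoly _ g_inj)) /=.
by apply: eq_bigr => m _; rewrite mcoeff_map_mpoly.
Qed.

Lemma mmap_comp n k (R S : comNzRingType) (f : {rmorphism R -> S}) (h : 'I_k -> S)
    (lq : n.-tuple {mpoly R[k]}) (p : {mpoly R[n]}) :
  mmap f h (p \mPo lq) = mmap f (fun i => mmap f h (tnth lq i)) p.
Proof.
elim/mpolyind: p => [|c m p _ _ IHp]; first by rewrite comp_mpoly0 !mmap0.
rewrite comp_mpolyD !mmapD IHp comp_mpolyZ !mmapZ comp_mpolyX mmapX rmorph_prod /=.
by congr (_ * _ + _); apply: eq_bigr => i _; rewrite rmorphXn.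
Qed.

Lemma mmap_mesym n (R S : comNzRingType) (f : {rmorphism R -> S}) (h : 'I_n -> S) k :
  mmap f h (mesym n R k) = (mesym n S k).@[h].
Proof.
rewrite !mesymE !raddf_sum /=; apply: eq_bigr => A _.
by rewrite mmapX mevalX.
Qed.

Lemma meval_mesymN n (R : comNzRingType) k (v : 'I_n -> R) :
  (mesym n R k).@[fun i => - v i] = (-1) ^+ k * (mesym n R k).@[v].
Proof.
rewrite !mesymE !raddf_sum mulr_sumr /=; apply: eq_bigr => A /eqP cardA.
rewrite !mevalX; under eq_bigr do rewrite exprNn.
rewrite big_split /= prodrXr; congr (_ ^+ _ * _).
rewrite -cardA -sum1_card [RHS]big_mkcond /=; apply: eq_bigr => i _.
by rewrite mnmE; case: (i \in A).
Qed.

Lemma coef_prod_XsubC_mesym (R : idomainType) n (cs : n.-tuple R) (k : 'I_n.+1) :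
  (\prod_(c <- cs) ('X - c%:P))`_(n - k) = (mesym n R k).@[fun i => - tnth cs i].
Proof. by rewrite mroots_coeff meval_mesymN. Qed.

Definition group_matrix (R : nzRingType) (gT : finGroupType) (G : {group gT})
    : 'M[{mpoly R[#|G|]}]_#|G| :=
  \matrix_(a, b) 'X_(gring_index G ((enum_val a)^-1 * enum_val b)).

Lemma map_group_matrix (R S : nzRingType) (f : {rmorphism R -> S})
    (gT : finGroupType) (G : {group gT}) :
  map_mx (map_mpoly f) (group_matrix R G) = group_matrix S G.
Proof. by apply/matrixP => a b; rewrite !mxE map_mpolyX. Qed.

Lemma mmap_det_group_matrix (R S : comNzRingType) (f : {rmorphism R -> S})
    (gT : finGroupType) (G : {group gT}) (v : 'I_#|G| -> S) :
  mmap f v (\det (group_matrix R G)) =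
  \det (\matrix_(a < #|G|, b < #|G|) v (gring_index G ((enum_val a)^-1 * enum_val b))).
Proof.
rewrite -det_map_mx; congr (\det _); apply/matrixP => a b.
by rewrite !mxE /= mmapX mmap1U.
Qed.

Section ReprGroupMatrix.
Variables (R : fieldType) (gT : finGroupType) (G : {group gT}).
Local Notation n := #|G|.

Definition repr_group_matrix d (rG : mx_representation R G d) : 'M[{mpoly R[n]}]_d :=
  \matrix_(r, c) \sum_(j < n) 'X_j * (rG (enum_val j) r c)%:MP_[n].

Definition repr_group_det d (rG : mx_representation R G d) := \det (repr_group_matrix rG).

Lemma repr_group_matrixE d (rG : mx_representation R G d) :
  repr_group_matrix rG = \sum_(j < n) 'X_j *: map_mx (@mpolyC n R) (rG (enum_val j)).
Proof.
apply/matrixP => r c; rewrite !mxE summxE; apply: eq_bigr => j _.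
by rewrite !mxE.
Qed.

Lemma repr_group_det_rsim d1 d2 (rG1 : mx_representation R G d1)
    (rG2 : mx_representation R G d2) :
  mx_rsim rG1 rG2 -> repr_group_det rG1 = repr_group_det rG2.
Proof.
case=> B eq_d; subst d2; rewrite row_free_unit => B_unit rGB.
pose BX := map_mx (@mpolyC n R) B.
have BX_nz : \det BX != 0 by rewrite det_map_mx mpolyC_eq0 -unitfE -unitmxE.
have BX_intertwines : repr_group_matrix rG1 *m BX = BX *m repr_group_matrix rG2.
  rewrite !repr_group_matrixE mulmx_suml mulmx_sumr; apply: eq_bigr => j _.
  by rewrite -scalemxAl -scalemxAr -!map_mxM rGB // enum_valP.
move/(congr1 determinant): BX_intertwines; rewrite !det_mulmx mulrC.
exact: mulfI.
Qed.

Lemma repr_group_det_dadd (rG1 rG2 : representation R G) :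
  repr_group_det (dadd_grepr rG1 rG2) = repr_group_det rG1 * repr_group_det rG2.
Proof.
rewrite /repr_group_det -(det_ublock _ 0); congr (\det _).
apply/matrixP => a b; rewrite /repr_group_matrix.
case: (split_ordP a) => {}a ->; case: (split_ordP b) => {}b ->;
  rewrite ?block_mxEul ?block_mxEur ?block_mxEdl ?block_mxEdr !mxE;
  under eq_bigr do rewrite /= ?block_mxEul ?block_mxEur ?block_mxEdl ?block_mxEdr ?mxE ?mulr0;
  by rewrite ?big1_eq.
Qed.

Lemma repr_group_det0 : repr_group_det (@grepr0 R _ G) = 1.
Proof. exact: det_mx00. Qed.

Lemma repr_group_det_dsum I (r : seq I) (P : pred I) (rG : I -> representation R G) :
  repr_group_det (\big[dadd_grepr/@grepr0 R _ G]_(i <- r | P i) rG i) =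
  \prod_(i <- r | P i) repr_group_det (rG i).
Proof.
exact: (big_morph (fun rG : representation R G => repr_group_det rG)
          repr_group_det_dadd repr_group_det0).
Qed.

Lemma repr_group_det_muln (rG : representation R G) k :
  repr_group_det (muln_grepr rG k) = repr_group_det rG ^+ k.
Proof. by rewrite repr_group_det_dsum prodr_const card_ord. Qed.

Lemma regular_repr_group_matrix : repr_group_matrix (regular_repr R G) = group_matrix R G.
Proof.
apply/matrixP => a b; rewrite !mxE.
set j0 := gring_index G _.
have Gv := @enum_valP _ (mem G).
have regular_entry j : (b == gring_index G (enum_val a * enum_val j)) = (j == j0).
  rewrite -(inj_eq (can_inj (@gring_valK _ G))) gring_indexK ?groupM ?Gv //.
  rewrite -(inj_eq (can_inj (@gring_valK _ G))) /j0 gring_indexK ?groupM ?groupV ?Gv //.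
  by rewrite -(inj_eq (mulgI (enum_val a)) (enum_val j)) mulKVg eq_sym.
rewrite (bigD1 j0) //= big1 => [|j nj0]; last by rewrite !mxE regular_entry (negbTE nj0) mulr0.
by rewrite !mxE regular_entry !eqxx mulr1 addr0.
Qed.

End ReprGroupMatrix.

Lemma group_det_factorization (gT : finGroupType) (G : {group gT}) :
  \det (group_matrix algC G) =
  \prod_(i : Iirr G) group_det_factor i ^+ irr_degree (socle_of_Iirr i).
Proof.
rewrite -regular_repr_group_matrix -/(repr_group_det _).
pose rG := \big[dadd_grepr/@grepr0 algC _ G]_(i : Iirr G)
             muln_grepr (Representation 'Chi_i) (irr_degree (socle_of_Iirr i)).
have /repr_group_det_rsim -> : mx_rsim (regular_repr algC G) rG.
  apply/cfRepr_rsimP; rewrite cfReprReg cfReg_sum cfRepr_dsum.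
  apply/eqP/eq_bigr => i _.
  by rewrite cfRepr_muln irrRepr -scaler_nat irr1_degree.
by rewrite repr_group_det_dsum; apply: eq_bigr => i _; rewrite repr_group_det_muln.
Qed.

(* [phi] is a ring morphism on the algebraic integers only; packaging them as a
   ring lets it act on polynomials through [mmap]. *)
Record aint := AInt { aint_val : algC; _ : aint_val \in Aint }.
HB.instance Definition _ := [isSub for aint_val].
HB.instance Definition _ := [Choice of aint by <:].
HB.instance Definition _ := [SubChoice_isSubComNzRing of aint by <:].
HB.instance Definition _ := GRing.RMorphism.copy aint_val val.

Definition aint_mpoly n (P : {mpoly algC[n]}) : {mpoly aint[n]} :=
  \sum_(m <- msupp P) insubd 0 P@_m *: 'X_[m].

Lemma aint_mpolyK n (P : {mpoly algC[n]}) :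
  P \is a mpolyOver n Aint -> map_mpoly aint_val (aint_mpoly P) = P.
Proof.
move=> /mpolyOverP P_Aint; rewrite raddf_sum /= [RHS]mpolyE.
apply: eq_bigr => m _; rewrite map_mpolyZ map_mpolyX.
by rewrite /= val_insubd P_Aint.
Qed.

Lemma map_mpoly_aint_val_inj n : injective (map_mpoly aint_val : {mpoly aint[n]} -> _).
Proof.
move=> p q eq_pq; apply/mpolyP => m; apply: val_inj.
by rewrite -!mcoeff_map_mpoly eq_pq.
Qed.

Definition mesym_tuple n (R : nzRingType) : n.-tuple {mpoly R[n]} :=
  [tuple mesym n R (val j).+1 | j < n].

Lemma map_mpoly_comp_mesym n (P : {mpoly aint[n]}) :
  map_mpoly aint_val (P \mPo mesym_tuple n aint) =
  map_mpoly aint_val P \mPo mesym_tuple n algC.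
Proof.
rewrite map_mpoly_comp; last exact: val_inj.
congr (_ \mPo _); apply: eq_from_tnth => j.
rewrite tnth_map !tnth_mktuple !mesymE raddf_sum /=.
by apply: eq_bigr => A _; rewrite map_mpolyX.
Qed.

Lemma group_det_dvd_sym_reductions (gT : finGroupType) (G : {group gT})
    (E H : Iirr G -> {mpoly algC[#|G|]}) :
  (forall i, is_symmetrization (group_det_factor i) (E i)) ->
  (forall i, is_symmetric_reduction (E i) (H i)) ->
  exists Q : {mpoly aint[#|G|]},
    \prod_i (aint_mpoly (H i) \mPo mesym_tuple #|G| aint) ^+ irr_degree (socle_of_Iirr i) =
    \det (group_matrix aint G) * Q.
Proof.
move=> E_sym H_red.
have /fin_all_exists2[Q Q_Aint E_Q] : forall i, exists2 Q : {mpoly algC[#|G|]},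
    Q \is a mpolyOver #|G| Aint & E i = group_det_factor i * Q.
  by move=> i; case: (E_sym i).
exists (\prod_i aint_mpoly (Q i) ^+ irr_degree (socle_of_Iirr i)).
apply: map_mpoly_aint_val_inj; rewrite rmorphM !rmorph_prod /= -det_map_mx.
rewrite map_group_matrix group_det_factorization -big_split /=.
apply: eq_bigr => i _; rewrite !rmorphXn /= aint_mpolyK // -exprMn -E_Q map_mpoly_comp_mesym.
by case: (H_red i) => H_Aint ->; rewrite aint_mpolyK.
Qed.

Section AintMorphism.
Variables (K : idomainType) (phi : algC -> K).
Hypothesis phi_hom : ring_hom_on_Aint phi.

Definition aint_phi (x : aint) : K := phi (aint_val x).

Lemma aint_phi_is_zmod_morphism : GRing.zmod_morphism aint_phi.
Proof.
case: phi_hom => _ phiD _ [x Ax] [y Ay]; rewrite /aint_phi /=.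
have Axy : x - y \in Aint by rewrite rpredB.
have := phiD (x - y) y Axy Ay; rewrite subrK => ->.
by rewrite addrK.
Qed.

Lemma aint_phi_is_monoid_morphism : GRing.monoid_morphism aint_phi.
Proof.
case: phi_hom => phi1 _ phiM; split=> [|[x Ax] [y Ay]]; first exact: phi1.
exact: phiM.
Qed.

HB.instance Definition _ :=
  GRing.isZmodMorphism.Build aint K aint_phi aint_phi_is_zmod_morphism.
HB.instance Definition _ :=
  GRing.isMonoidMorphism.Build aint K aint_phi aint_phi_is_monoid_morphism.

Lemma eval_symmetric_reduction n (H : {mpoly algC[n]}) (v : 'I_n -> K) (a : 'I_n -> K) :
  H \is a mpolyOver n Aint -> (forall j, a j = (mesym n K (val j).+1).@[v]) ->
  mmap aint_phi v (aint_mpoly H \mPo mesym_tuple n aint) = eval_mapped phi H a.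
Proof.
move=> H_Aint Da; rewrite mmap_comp /eval_mapped -{2}(aint_mpolyK H_Aint).
rewrite mmap_map_mpoly; last exact: val_inj.
by apply: mmap_eq => j; rewrite tnth_mktuple mmap_mesym Da.
Qed.

Lemma group_det_eval_neq0 (gT : finGroupType) (G : {group gT})
    (E H : Iirr G -> {mpoly algC[#|G|]}) (v a : 'I_#|G| -> K) :
  (forall i, is_symmetrization (group_det_factor i) (E i)) ->
  (forall i, is_symmetric_reduction (E i) (H i)) ->
  (forall j, a j = (mesym #|G| K (val j).+1).@[v]) ->
  (forall i, eval_mapped phi (H i) a != 0) ->
  \det (\matrix_(r < #|G|, c < #|G|) v (gring_index G ((enum_val r)^-1 * enum_val c))) != 0.
Proof.
move=> E_sym H_red Da H_nz; have [Q group_det_dvd] := group_det_dvd_sym_reductions E_sym H_red.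
have prod_nz : mmap aint_phi v (\prod_i (aint_mpoly (H i) \mPo mesym_tuple #|G| aint)
                                   ^+ irr_degree (socle_of_Iirr i)) != 0.
  rewrite rmorph_prod; apply/prodf_neq0 => i _.
  by rewrite rmorphXn expf_neq0 //= (eval_symmetric_reduction (H_red i).1 Da).
rewrite -(mmap_det_group_matrix aint_phi); apply: contraNneq prod_nz => det_0.
by rewrite group_det_dvd rmorphM /= det_0 mul0r.
Qed.

End AintMorphism.

Section AdjoinEmbedding.
Variables (F : fieldType) (L : fieldExtType F) (K : fieldType) (iota : {rmorphism F -> K}).
Variables (x : L) (p : {poly F}) (y : K).
Hypotheses (Fx_full : <<1; x>>%VS = fullv)
           (minPoly_x : minPoly 1 x = map_poly (in_alg L) p)
           (root_y : root (map_poly iota p) y).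

Lemma exists_adjoin_poly z : exists q : {poly F}, z == (map_poly (in_alg L) q).[x].
Proof.
have /Fadjoin1_polyP[q ->] : z \in <<1; x>>%VS by rewrite Fx_full memvf.
by exists q.
Qed.

Definition adjoin_embedding z : K :=
  (map_poly iota (xchoose (exists_adjoin_poly z))).[y].

Lemma root_map_adjoin q : root (map_poly (in_alg L) q) x -> root (map_poly iota q) y.
Proof.
move=> /(minPoly_dvdp (alg_polyOver 1%VS q)); rewrite minPoly_x dvdp_map.
by case/dvdpP=> r ->; rewrite rmorphM rootM root_y orbT.
Qed.

Lemma adjoin_embeddingE q :
  adjoin_embedding (map_poly (in_alg L) q).[x] = (map_poly iota q).[y].
Proof.
rewrite /adjoin_embedding; set q' := xchoose _.
have /eqP Dq' := xchooseP (exists_adjoin_poly (map_poly (in_alg L) q).[x]).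
have : root (map_poly (in_alg L) (q - q')) x by rewrite /root rmorphB hornerD hornerN -Dq' subrr.
by move/root_map_adjoin; rewrite /root rmorphB hornerD hornerN subr_eq0 => /eqP.
Qed.

Lemma adjoin_embedding_is_zmod_morphism : GRing.zmod_morphism adjoin_embedding.
Proof.
move=> z1 z2; have /eqP-> := xchooseP (exists_adjoin_poly z1).
have /eqP-> := xchooseP (exists_adjoin_poly z2).
by rewrite -hornerN -hornerD -rmorphB !adjoin_embeddingE rmorphB hornerD hornerN.
Qed.

Lemma adjoin_embedding_is_monoid_morphism : GRing.monoid_morphism adjoin_embedding.
Proof.
split=> [|z1 z2].
  have -> : 1 = (map_poly (in_alg L) 1).[x] by rewrite rmorph1 hornerC.
  by rewrite adjoin_embeddingE rmorph1 hornerC.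
have /eqP-> := xchooseP (exists_adjoin_poly z1).
have /eqP-> := xchooseP (exists_adjoin_poly z2).
by rewrite -hornerM -rmorphM !adjoin_embeddingE rmorphM hornerM.
Qed.

HB.instance Definition _ := GRing.isZmodMorphism.Build L K adjoin_embedding
  adjoin_embedding_is_zmod_morphism.
HB.instance Definition _ := GRing.isMonoidMorphism.Build L K adjoin_embedding
  adjoin_embedding_is_monoid_morphism.

Definition adjoin_rmorphism : {rmorphism L -> K} := adjoin_embedding.

Lemma adjoin_rmorphism_alg c : adjoin_rmorphism c%:A = iota c.
Proof.
rewrite /adjoin_rmorphism /=.
have -> : c%:A = (map_poly (in_alg L) c%:P).[x] by rewrite map_polyC hornerC.
by rewrite adjoin_embeddingE map_polyC hornerC.
Qed.

End AdjoinEmbedding.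

Lemma free_gal_orbit (F : fieldType) (L : splittingFieldType F) (K : fieldType)
    (sigma : {rmorphism L -> K}) (G : {group gal_of {:L}}) (x : L) :
  \det (\matrix_(a < #|G|, b < #|G|) sigma (((enum_val a)^-1 * enum_val b)%g x)) != 0 ->
  free [seq (g : gal_of {:L}) x | g in G].
Proof.
move=> det_nz; change (free (map_tuple (fun g : gal_of {:L} => g x) (enum_tuple G))).
apply/freeP => k k_rel i; apply/eqP; apply: contraNT det_nz => k_i_nz; apply/det0P.
pose tau (h : 'I_#|G|) := gring_index G (enum_val h)^-1.
have tauE h : enum_val (tau h) = (enum_val h)^-1%g by rewrite gring_indexK ?groupV ?enum_valP.
have tauK : involutive tau by move=> h; apply: enum_val_inj; rewrite !tauE invgK.
(* Left kernel vector: ∑_h k(h^-1) (h^-1 g)(x) = g (∑_h k(h) h(x)) = 0. *)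
exists (\row_h sigma (k (tau h))%:A).
  apply/eqP => /rowP /(_ (tau i)); rewrite !mxE tauK => /eqP.
  by rewrite fmorph_eq0 scaler_eq0 oner_eq0 orbF; apply/negP.
apply/rowP => b; rewrite !mxE.
have orbit_rel : \sum_h k h *: (enum_val h : gal_of {:L}) x = 0.
  by rewrite -[RHS]k_rel; apply: eq_bigr => h _; congr (_ *: _); rewrite /= nth_image.
transitivity (sigma ((enum_val b : gal_of {:L})
  (\sum_h k (tau h) *: (enum_val (tau h) : gal_of {:L}) x))).
  rewrite !raddf_sum; apply: eq_bigr => h _ /=.
  by rewrite !mxE galM ?memvf // tauE linearZ /= -[in RHS]mulr_algl rmorphM.
have -> : \sum_h k (tau h) *: (enum_val (tau h) : gal_of {:L}) x = 0.
  by rewrite -[RHS]orbit_rel [RHS](reindex_inj (inv_inj tauK)).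
by rewrite !raddf0.
Qed.

Section NormalSimpleExtension.
Variables (F : fieldType) (L : splittingFieldType F) (f : {poly F}).
Hypotheses (f_monic : f \is monic) (f_sep : separable_poly f) (f_irr : irreducible_poly f).
Hypothesis L_split : splittingFieldFor 1%VS (map_poly (in_alg L) f) {:L}%VS.
Hypothesis f_gen : forall alpha : L, root (map_poly (in_alg L) f) alpha ->
  <<1%VS; alpha>>%VS = {:L}%VS.
Variable alpha : L.
Hypothesis f_alpha : root (map_poly (in_alg L) f) alpha.

Local Notation fL := (map_poly (in_alg L) f).
Local Notation G := 'Gal({:L}%VS / 1%AS)%G.
Local Notation n := #|'Gal({:L}%VS / 1%AS)%g|.

Lemma minPoly_alpha : minPoly 1 alpha = fL.
Proof.
have [p Dp] := polyOver1P (minPolyOver 1 alpha).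
have p_monic : p \is monic by rewrite -(map_monic (in_alg L)) -Dp monic_minPoly.
have p_nconst : size p != 1.
  have := root_size_gt1 (monic_neq0 (monic_minPoly 1 alpha)) (root_minPoly 1 alpha).
  by rewrite Dp size_map_poly; case: (size p) => [|[|]].
have : p %| f by rewrite -(dvdp_map (in_alg L)) -Dp minPoly_dvdp ?alg_polyOver.
by move/(f_irr.2 p p_nconst); rewrite eqp_monic // Dp => /eqP->.
Qed.

Lemma galois_full : galois 1 {:L}.
Proof.
apply/splitting_galoisField; exists fL; split => //; first exact: alg_polyOver.
by rewrite separable_map.
Qed.

Lemma dim_full : \dim {:L} = n.
Proof. by rewrite -(galois_dim galois_full) dimv1 divn1. Qed.

Lemma size_f : size f = n.+1.
Proof.
rewrite -(size_map_poly (in_alg L)) -minPoly_alpha size_minPoly adjoin_degreeE.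
by rewrite (f_gen f_alpha) dimv1 divn1 dim_full.
Qed.

Lemma gal_horner (g : gal_of {:L}) (q : {poly F}) : g \in G ->
  g (map_poly (in_alg L) q).[alpha] = (map_poly (in_alg L) q).[g alpha].
Proof.
move=> Gg; rewrite -horner_map; congr (_.[_]).
exact: (fixedPoly_gal (sub1v _) Gg (alg_polyOver _ _)).
Qed.

Lemma gal_root (g : gal_of {:L}) : g \in G -> root fL (g alpha).
Proof. by move=> Gg; rewrite /root -gal_horner // (rootP f_alpha) rmorph0. Qed.

Lemma gal_eq_at_root (g h : gal_of {:L}) : g \in G -> h \in G -> g alpha = h alpha -> g = h.
Proof.
move=> Gg Gh gh_alpha; apply/eqP/gal_eqP => z _.
have /Fadjoin1_polyP[q ->] : z \in <<1; alpha>>%VS by rewrite (f_gen f_alpha) memvf.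
by rewrite !gal_horner // gh_alpha.
Qed.

Variables (K : closedFieldType) (iota : {rmorphism F -> K}).

Lemma exists_root_iota_f : exists beta : K, root (map_poly iota f) beta.
Proof. by apply/closed_rootP; rewrite size_map_poly size_f eqSS -lt0n cardG_gt0. Qed.

Definition embedding : {rmorphism L -> K} :=
  adjoin_rmorphism (f_gen f_alpha) minPoly_alpha (xchooseP exists_root_iota_f).

Lemma embedding_alg c : embedding c%:A = iota c.
Proof. exact: adjoin_rmorphism_alg. Qed.

Definition conjugates : n.-tuple K := [tuple embedding ((enum_val j : gal_of {:L}) alpha) | j < n].

Lemma map_embedding_fL : map_poly embedding fL = map_poly iota f.
Proof.
by rewrite -map_poly_comp; apply: eq_map_poly => c; apply: embedding_alg.
Qed.

Lemma iota_f_factor : map_poly iota f = \prod_(c <- conjugates) ('X - c%:P).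
Proof.
have conj_roots : all (root (map_poly iota f)) conjugates.
  apply/allP => _ /mapP[j _ ->].
  rewrite -map_embedding_fL /root horner_map (rootP (gal_root (enum_valP j))).
  by rewrite rmorph0.
have conj_uniq : uniq_roots conjugates.
  rewrite uniq_rootsE map_inj_uniq ?enum_uniq // => i j /fmorph_inj.
  by move/(gal_eq_at_root (enum_valP i) (enum_valP j))/enum_val_inj.
have size_iota_f : size (map_poly iota f) = (size conjugates).+1.
  by rewrite size_map_poly size_f size_tuple.
rewrite {1}(all_roots_prod_XsubC size_iota_f conj_roots conj_uniq).
by rewrite lead_coef_map (monicP f_monic) rmorph1 scale1r.
Qed.

Lemma coef_iota_f (j : 'I_n) :
  iota f`_((size f).-1 - (val j).+1) =
  (mesym n K (val j).+1).@[fun i => - embedding ((enum_val i : gal_of {:L}) alpha)].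
Proof.
rewrite size_f -coef_map iota_f_factor.
rewrite (coef_prod_XsubC_mesym conjugates (@Ordinal n.+1 (val j).+1 (ltn_ord j))).
by apply: meval_eq => i; rewrite tnth_mktuple.
Qed.

Lemma basis_of_group_det :
  \det (\matrix_(r < n, c < n)
          - embedding ((enum_val (gring_index G ((enum_val r)^-1 * enum_val c)) : gal_of {:L}) alpha))
    != 0 ->
  basis_of {:L}%VS [seq (g : gal_of {:L}%VS) alpha | g in 'Gal({:L}%VS / 1%AS)%g].
Proof.
move=> det_nz; rewrite basisEfree subvf size_image dim_full leqnn !andbT.
apply: (@free_gal_orbit _ _ _ embedding G); move: det_nz.
rewrite [X in \det X](_ : _ = -1 *: \matrix_(r < n, c < n)
    embedding (((enum_val r)^-1 * enum_val c : gal_of {:L})%g alpha)).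
  by rewrite detZ mulf_eq0 negb_or => /andP[].
apply/matrixP => r c; rewrite !mxE mulN1r gring_indexK // groupM ?groupV ?enum_valP //.
Qed.

End NormalSimpleExtension.

Theorem theorem5p1 (F : fieldType) (L : splittingFieldType F) (f : {poly F})
  (f_monic : f \is monic) (f_sep : separable_poly f)
  (f_irr : irreducible_poly f)
  (L_split : splittingFieldFor 1%VS (map_poly (in_alg L) f) {:L}%VS)
  (f_gen : forall alpha : L, root (map_poly (in_alg L) f) alpha ->
             <<1%VS; alpha>>%VS = {:L}%VS)
  (K : closedFieldType) (iota : {rmorphism F -> K})
  (K_clos : is_alg_closure iota)
  (phi : algC -> K) (phi_hom : ring_hom_on_Aint phi)
  (E H : Iirr 'Gal({:L}%VS / 1%AS)%G -> {mpoly algC[#|'Gal({:L}%VS / 1%AS)%g|]})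
  (E_sym : forall i, is_symmetrization (group_det_factor i) (E i))
  (H_red : forall i, is_symmetric_reduction (E i) (H i))
  (H_nz : forall i,
     eval_mapped phi (H i)
       (fun j : 'I_#|'Gal({:L}%VS / 1%AS)%g| =>
          iota f`_((size f).-1 - (val j).+1)) != 0) :
  forall alpha : L, root (map_poly (in_alg L) f) alpha ->
    basis_of {:L}%VS [seq (g : gal_of {:L}%VS) alpha | g in 'Gal({:L}%VS / 1%AS)%g].
Proof.
move=> alpha f_alpha.
apply: (@basis_of_group_det F L f f_monic f_sep f_irr L_split f_gen alpha f_alpha K iota).
exact: (group_det_eval_neq0 phi_hom E_sym H_red
          (coef_iota_f f_monic f_sep f_irr L_split f_gen f_alpha iota) H_nz).
Qed.
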